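(* Consider the algorithm CCom described in the context. Then the fraction of bad IDs in the system is always at most $1/2$.
   Context: Model. IDs are good (follow the algorithm) or bad (controlled by a single adversary, which schedules joins and departures). The adversary controls at most an $\alpha\le1/6$ fraction of total computational power. Good IDs announce their departures; bad IDs need not. A committee (assumed to have a good majority and to act correctly via Byzantine consensus) runs the algorithm. Algorithm CCom. The committee maintains $\mathcal S_{\mathrm{old}}$ (IDs present after the most recent purge) and $\mathcal S$ (current IDs: joining IDs are added after solving an entrance puzzle, announced departures are removed). Whenever $|(\mathcal S\cup\mathcal S_{\mathrm{old}})\setminus(\mathcal S\cap\mathcal S_{\mathrm{old}})|\ge|\mathcal S_{\mathrm{old}}|/3$, a purge occurs: a fresh random string is broadcast and every ID must return within one round a solution to a $1$-round computational puzzle whose inputs include its public key and that string; IDs failing to do so are removed, and $\mathcal S_{\mathrm{old}},\mathcal S$ are reset to the IDs returning valid solutions. Epochs are the periods between consecutive purges. Initially fewer than a third of the IDs are bad, and at the end of every epoch the number of bad IDs is less than a third of all IDs. *)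

From mathcomp Require Import all_boot.
Set Implicit Arguments. Unset Strict Implicit. Unset Printing Implicit Defensive.

(* Identifiers range over a finite type [T] (the IDs that ever appear in an
   execution); [bad x] means that ID [x] is controlled by the adversary.
   A committee state is the pair (S_old, S). *)

Definition symdiff (T : finType) (A B : {set T}) : {set T} :=
  (A :|: B) :\: (A :&: B).

Definition purge_due (T : finType) (Sold S : {set T}) : bool :=
  #|Sold| <= 3 * #|symdiff S Sold|.

Definition less_than_third_bad (T : finType) (bad : pred T) (A : {set T}) : Prop :=
  3 * #|[set x in A | bad x]| < #|A|.

(* Joins (after the entrance puzzle) add an ID to S;
   announced departures remove an ID from S (good IDs always announce; a bad ID
   leaving silently simply stays in S, i.e. no step).  Whenever the purge
   condition holds, the next step is a purge: S_old and S are reset to the set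
   S' of current IDs that returned valid puzzle solutions, and (standing
   assumption) fewer than a third of these are bad. *)
Inductive ccom_step (T : finType) (bad : pred T) :
  {set T} * {set T} -> {set T} * {set T} -> Prop :=
| ccom_join (Sold S : {set T}) (x : T) :
    ~~ purge_due Sold S -> x \notin S -> ccom_step bad (Sold, S) (Sold, x |: S)
| ccom_depart (Sold S : {set T}) (x : T) :
    ~~ purge_due Sold S -> x \in S -> ccom_step bad (Sold, S) (Sold, S :\ x)
| ccom_purge (Sold S S' : {set T}) :
    purge_due Sold S -> S' \subset S -> less_than_third_bad bad S' ->
    ccom_step bad (Sold, S) (S', S').

Inductive ccom_reachable (T : finType) (bad : pred T) : {set T} * {set T} -> Prop :=
| ccom_init (S0 : {set T}) : less_than_third_bad bad S0 -> ccom_reachable bad (S0, S0)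
| ccom_next st st' : ccom_reachable bad st -> ccom_step bad st st' ->
    ccom_reachable bad st'.

(* Between purges, every join or announced departure changes the symmetric
   difference of S and S_old by at most one ID, and a purge is triggered as
   soon as it reaches |S_old|/3; so at all times |S Δ S_old| <= (|S_old| + 2)/3
   while fewer than a third of S_old is bad.  The bad IDs of S lie among the
   bad IDs of S_old and the newcomers S \ S_old, and 6 bad(S_old) + 3 |S Δ S_old|
   <= 3 |S_old| is exactly what is needed for 2 bad(S) <= |S|. *)
From mathcomp Require Import all_boot.
From mathcomp Require Import zify.
Set Implicit Arguments. Unset Strict Implicit. Unset Printing Implicit Defensive.

Section Symdiff.
Variable T : finType.
Implicit Types (A B C : {set T}) (x : T).

Lemma symdiffv A : symdiff A A = set0.
Proof. by rewrite /symdiff setUid setIid setDv. Qed.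

Lemma card_symdiff A B : #|symdiff A B| = #|A :\: B| + #|B :\: A|.
Proof.
rewrite -cardsUI; have -> : (A :\: B) :&: (B :\: A) = set0.
  by apply/setP=> y; rewrite !inE; case: (y \in A); case: (y \in B).
rewrite cards0 addn0; apply: eq_card=> y.
by rewrite !inE; case: (y \in A); case: (y \in B).
Qed.

Lemma card_symdiff_triangle A B C :
  #|symdiff A C| <= #|symdiff A B| + #|symdiff B C|.
Proof.
apply: leq_trans (leq_card_setU _ _); apply: subset_leq_card.
apply/subsetP=> y; rewrite !inE.
by case: (y \in A); case: (y \in B); case: (y \in C).
Qed.

Lemma card_symdiff_setU1 x A : #|symdiff (x |: A) A| <= 1.
Proof.
rewrite -(cards1 x); apply: subset_leq_card; apply/subsetP=> y.
by rewrite !inE; case: (y == x); case: (y \in A).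
Qed.

Lemma card_symdiff_setD1 x A : #|symdiff (A :\ x) A| <= 1.
Proof.
rewrite -(cards1 x); apply: subset_leq_card; apply/subsetP=> y.
by rewrite !inE; case: (y == x); case: (y \in A).
Qed.

Lemma card_symdiff_step A A' B :
  #|symdiff A' A| <= 1 -> #|symdiff A' B| <= #|symdiff A B| + 1.
Proof.
move=> le_A'A; rewrite addnC.
exact: leq_trans (card_symdiff_triangle A' A B) (leq_add le_A'A (leqnn _)).
Qed.

Lemma card_sep_le (p : pred T) A B :
  #|[set y in A | p y]| <= #|[set y in B | p y]| + #|A :\: B|.
Proof.
apply: leq_trans (leq_card_setU _ _); apply: subset_leq_card.
by apply/subsetP=> y; rewrite !inE; case: (y \in A); case: (y \in B); case: (p y).
Qed.

End Symdiff.

Section Invariant.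
Variables (T : finType) (bad : pred T).

Definition ccom_invariant (st : {set T} * {set T}) : Prop :=
  less_than_third_bad bad st.1 /\ 3 * #|symdiff st.2 st.1| <= #|st.1| + 2.

Lemma ccom_invariant_reset S : less_than_third_bad bad S -> ccom_invariant (S, S).
Proof. by split=> //=; rewrite symdiffv cards0. Qed.

Lemma ccom_step_invariant st st' :
  ccom_invariant st -> ccom_step bad st st' -> ccom_invariant st'.
Proof.
move=> inv_st step; case: step inv_st => [Sold S x | Sold S x | Sold S S' _ _ + _];
  last exact: ccom_invariant_reset.
all: rewrite /purge_due -ltnNge => not_due _ [/= third_bad _]; split=> //=.
- have := card_symdiff_step Sold (card_symdiff_setU1 x S); lia.
- have := card_symdiff_step Sold (card_symdiff_setD1 x S); lia.
Qed.

Lemma ccom_reachable_invariant st : ccom_reachable bad st -> ccom_invariant st.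
Proof.
elim=> [S0 | st0 st1 _]; first exact: ccom_invariant_reset.
exact: ccom_step_invariant.
Qed.

Lemma ccom_invariant_half_bad Sold S :
  ccom_invariant (Sold, S) -> 2 * #|[set x in S | bad x]| <= #|S|.
Proof.
rewrite /ccom_invariant /less_than_third_bad card_symdiff /= => -[third_bad near].
have bad_S := card_sep_le bad S Sold.
have card_S := cardsID Sold S; have card_Sold := cardsID S Sold.
rewrite setIC in card_Sold; lia.
Qed.

End Invariant.

Theorem lemma3 (T : finType) (bad : pred T) (Sold S : {set T}) :
  ccom_reachable bad (Sold, S) ->
  2 * #|[set x in S | bad x]| <= #|S|.
Proof.
by move/ccom_reachable_invariant; apply: ccom_invariant_half_bad.
Qed.
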